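(* For every integer $m\ge0$ and every odd positive integer $k$, \[ \sum_{i=0}^{2m}(-1)^i\binom{m+i}{m-i}\binom{m+k-i}{m-k+i}=0 . \]
   Context: Binomial coefficients $\binom{a}{b}$ are taken to be $0$ when $b<0$ or $b>a$ (in particular, whenever the lower index is negative). *)

From mathcomp Require Import all_boot all_order all_algebra.
Set Implicit Arguments. Unset Strict Implicit. Unset Printing Implicit Defensive.
Import Order.TTheory GRing.Theory Num.Theory.
Local Open Scope ring_scope.

Definition binomZ (a b : int) : int :=
  if (b < 0) || (a < b) then 0 else ('C(`|a|%N, `|b|%N))%:Z.

From mathcomp Require Import all_boot all_order all_algebra.
From mathcomp Require Import zify ring.
Import Order.TTheory GRing.Theory Num.Theory.
Local Open Scope ring_scope.

(* Writing [c j = binomZ (m + j) (m - j)], the summand is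
   [(-1)^i c i c (k - i)].  It vanishes unless [0 <= i <= min m k], so the sum
   may be taken over [0 <= i <= k] instead; there the reflection [i |-> k - i]
   changes the sign [(-1)^i] (as [k] is odd) and fixes [c i c (k - i)], so the
   sum equals its own opposite. *)

Definition cbinom (m : nat) (j : int) : int := binomZ (m%:Z + j) (m%:Z - j).

Lemma cbinom_out (m : nat) (j : int) :
  (j < 0) || (m%:Z < j) -> cbinom m j = 0.
Proof.
move=> /orP j_out; rewrite /cbinom /binomZ.
suff -> : (m%:Z - j < 0) || (m%:Z + j < m%:Z - j) by [].
by apply/orP; case: j_out => ?; [right | left]; lia.
Qed.

Lemma big_nat_trunc (R : nmodType) (n N : nat) (F : nat -> R) :
  (n <= N)%N -> (forall i, (n <= i)%N -> F i = 0) ->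
  \sum_(0 <= i < N) F i = \sum_(0 <= i < n) F i.
Proof.
move=> le_nN F0; rewrite (big_cat_nat (leq0n n) le_nN) /=.
rewrite [X in _ + X]big1_seq ?addr0 // => i /andP[_].
by rewrite mem_index_iota => /andP[/F0].
Qed.

Lemma big_nat_rev_oppr_eq0 (R : numDomainType) (k : nat) (F : nat -> R) :
  (forall i, (i <= k)%N -> F (k - i)%N = - F i) ->
  \sum_(0 <= i < k.+1) F i = 0.
Proof.
move=> Frev; set S := \sum_(0 <= i < k.+1) F i.
have S_opp : S = - S.
  rewrite {1}/S big_nat_rev /= -sumrN big_nat_cond [RHS]big_nat_cond.
  apply: eq_bigr => i /andP[/andP[_ lt_ik] _].
  by rewrite add0n subSS Frev.
have : 2%:R * S = 0 by rewrite mulr_natl mulr2n {2}S_opp subrr.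
by move/eqP; rewrite mulf_eq0 pnatr_eq0 => /eqP.
Qed.

Lemma signr_subn_odd (R : pzRingType) (k i : nat) :
  odd k -> (i <= k)%N -> (-1) ^+ (k - i) = - (-1) ^+ i :> R.
Proof. by move=> odd_k le_ik; rewrite -signr_odd oddB // odd_k signrN signr_odd. Qed.

Theorem mainTheorem14 (m k : nat) (hk : odd k) :
  \sum_(0 <= i < (2 * m).+1)
     (-1) ^+ i * binomZ (m%:Z + i%:Z) (m%:Z - i%:Z)
       * binomZ (m%:Z + k%:Z - i%:Z) (m%:Z - k%:Z + i%:Z) = 0 :> int.
Proof.
pose F (i : nat) : int := (-1) ^+ i * cbinom m i%:Z * cbinom m (k%:Z - i%:Z).
have -> : \sum_(0 <= i < (2 * m).+1)
     (-1) ^+ i * binomZ (m%:Z + i%:Z) (m%:Z - i%:Z)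
       * binomZ (m%:Z + k%:Z - i%:Z) (m%:Z - k%:Z + i%:Z)
    = \sum_(0 <= i < (2 * m).+1) F i.
  by apply: eq_bigr => i _; rewrite /F /cbinom; congr (_ * binomZ _ _); ring.
have F0 i : (minn m k < i)%N -> F i = 0.
  move=> lt_min_i; rewrite /F; have [le_im | lt_mi] := leqP i m.
    by rewrite (@cbinom_out m (k%:Z - i%:Z)) ?mulr0 //; apply/orP; left; lia.
  by rewrite (@cbinom_out m i%:Z) ?mulr0 ?mul0r //; apply/orP; right; lia.
rewrite (@big_nat_trunc _ (minn m k).+1) //; last by lia.
rewrite -(@big_nat_trunc _ (minn m k).+1 k.+1) //; last by lia.
apply: big_nat_rev_oppr_eq0 => i le_ik; rewrite /F.
have -> : (k - i)%N%:Z = k%:Z - i%:Z by lia.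
have -> : k%:Z - (k%:Z - i%:Z) = i%:Z by ring.
by rewrite signr_subn_odd // !mulNr [X in - X]mulrAC.
Qed.
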